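(* Let $L\ge1$, let $\sigma$ be $L$-periodic, $\theta$ an affine permutation of period $L$, and $\mu$ a Maya diagram of charge zero (the combined Maya diagram of the Young diagrams on the $L$ top/bottom external legs). Let $M\ge1$, $\sigma'$ ($ML$-periodic) and $\theta'$ (affine permutation of period $ML$) satisfy $\sigma\circ\theta=\sigma'\circ\theta'$ and $\mu\circ\theta=\emptyset\circ\theta'$ (such data exist). Then, with $\nu=(\emptyset,\emptyset)$ the pair of empty Young diagrams, $$F^{(L)}_{(\sigma,\theta;\mu,(\emptyset,\emptyset))}(u_0,\dots,u_{L-1})=F^{(ML)}_{(\sigma',\theta';\emptyset,(\emptyset,\emptyset))}(u'_0,\dots,u'_{ML-1})\Big|_{u'_{i+kL}=u_i\ (0\le i\le L-1,\ 0\le k\le M-1)}.$$ That is, the non-commutative topological vertex of the generalized conifold with $L-1$ compact curves and boundary data $\mu$ equals the closed BPS (crystal) partition function $\mathcal{C}_{(\sigma',\theta';\emptyset,(\emptyset,\emptyset))}$ of its $\mathbb{Z}_M$ orbifold under the specialization $q^\theta_i=q'^{\theta'}_i=q'^{\theta'}_{i+L}=\cdots=q'^{\theta'}_{i+(M-1)L}$.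
   Context: $\mathbb{Z}_h=\mathbb{Z}+\tfrac12$. For $K\ge1$, an affine permutation of period $K$ is a bijection $\theta:\mathbb{Z}_h\to\mathbb{Z}_h$ with $\theta(h+K)=\theta(h)+K$ and $\sum_{i=1}^K\theta(i-\frac12)=\sum_{i=1}^K(i-\frac12)$; a map $f:\mathbb{Z}_h\to\{\pm1\}$ is $K$-periodic if $f(h+K)=f(h)$. A Maya diagram is a map $\lambda:\mathbb{Z}_h\to\{\pm1\}$ equal to $-1$ for $h\ll0$ and $+1$ for $h\gg0$; its charge is $\#\{h>0:\lambda(h)=-1\}-\#\{h<0:\lambda(h)=+1\}$; $\emptyset$ denotes the Maya diagram with $\emptyset(h)=-1$ for $h<0$, $+1$ for $h>0$ (and also the empty Young diagram). A Young diagram $\lambda=(\lambda_1\ge\lambda_2\ge\cdots)$ is identified with its box set $\{(x,y)\in\mathbb{Z}_{\ge0}^2: x<\lambda_{y+1}\}$; $|\lambda|$ is its number of boxes. Write $\lambda\overset{+}{\succ}\lambda'$ if $\lambda_1\ge\lambda'_1\ge\lambda_2\ge\lambda'_2\ge\cdots$ and $\lambda\overset{-}{\succ}\lambda'$ if the same interlacing holds for the transposes. Fix $K\ge1$, a $K$-periodic $\sigma$, an affine permutation $\theta$ of period $K$, a Maya diagram $\mu$ and Young diagrams $\nu=(\nu_+,\nu_-)$. A transition of type $(\sigma,\theta;\mu,\nu)$ is a map $\mathcal{V}$ from $\mathbb{Z}$ to Young diagrams such that $\mathcal{V}(n)=\nu_-$ for $n\ll0$, $\mathcal{V}(n)=\nu_+$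 for $n\gg0$, and for every $h\in\mathbb{Z}_h$, writing $\epsilon=\mu(\theta(h))$ and $s=\sigma(\theta(h))$, one has $\mathcal{V}(h-\epsilon/2)\overset{s}{\succ}\mathcal{V}(h+\epsilon/2)$. (It is a known fact, assumed here, that there is a unique minimal transition $\mathcal{V}_{\min}$ with $\mathcal{V}_{\min}(n)\subseteq\mathcal{V}(n)$ for all $n$ and all transitions $\mathcal{V}$.) For a transition $\mathcal{V}$ and $0\le i\le K-1$ set $w_i(\mathcal{V})=\sum_{n\equiv i\ (\mathrm{mod}\ K)}(|\mathcal{V}(n)|-|\mathcal{V}_{\min}(n)|)$, and define $F^{(K)}_{(\sigma,\theta;\mu,\nu)}(u_0,\dots,u_{K-1})=\sum_{\mathcal{V}}\prod_{i=0}^{K-1}u_i^{w_i(\mathcal{V})}$, summed over all transitions of type $(\sigma,\theta;\mu,\nu)$. The non-commutative topological vertex is $\mathcal{C}_{(\sigma,\theta;\mu,\nu)}(q_0,\dots,q_{K-1})=F^{(K)}_{(\sigma,\theta;\mu,\nu)}(q^\theta_0,\dots,q^\theta_{K-1})$, where, with $q_{j+K}=q_j$, $a=\theta^{-1}(i-\frac12)$, $b=\theta^{-1}(i+\frac12)$: $q^\theta_i=q_{a+1/2}\cdots q_{b-1/2}$ if $a<b$, and $q^\theta_i=q_{a-1/2}^{-1}\cdots q_{b+1/2}^{-1}$ if $a>b$. *)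

From HB Require Import structures.
From mathcomp Require Import all_boot all_order all_algebra.
From Stdlib Require Import ClassicalEpsilon.
Set Implicit Arguments. Unset Strict Implicit. Unset Printing Implicit Defensive.
Import Order.TTheory GRing.Theory Num.Theory.

(* Encoding: a half-integer h \in Z + 1/2 is represented by the integer a
   with h = a + 1/2.  Hence h - 1/2 = a and h + 1/2 = a + 1, and
   i - 1/2 (i = 1..K) corresponds to a = i - 1 = 0..K-1.
   Signs +1 / -1 are encoded as true / false. *)

Local Open Scope ring_scope.

Definition affine_perm (K : nat) (th : int -> int) : Prop :=
  bijective th /\
  (forall a : int, th (a + K%:Z) = th a + K%:Z) /\
  \sum_(0 <= i < K) th i%:Z = \sum_(0 <= i < K) (i%:Z : int).

Definition periodic (K : nat) (f : int -> bool) : Prop :=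
  forall a : int, f (a + K%:Z) = f a.

Definition maya_bound (mu : int -> bool) (N : nat) : Prop :=
  forall a : int, (N%:Z <= a -> mu a) /\ (a < - N%:Z -> ~~ mu a).

Definition is_maya (mu : int -> bool) : Prop := exists N, maya_bound mu N.

(* charge = #{h>0 : mu h = -1} - #{h<0 : mu h = +1};  h > 0 <-> a >= 0 *)
Definition charge_zero (mu : int -> bool) : Prop :=
  exists N : nat, maya_bound mu N /\
    (\sum_(0 <= j < N) (~~ mu j%:Z : nat))%N =
    (\sum_(0 <= j < N) (mu (- (j.+1)%:Z) : nat))%N.

Definition empty_maya (a : int) : bool := 0 <= a.

Local Close Scope ring_scope.

Definition young (s : seq nat) : bool :=
  sorted (fun x y => y <= x) s && all (fun x => 0 < x) s.

Definition row (l : seq nat) (i : nat) : nat := nth 0 l i.        (* lambda_{i+1} *)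
Definition col (l : seq nat) (j : nat) : nat := count (fun x => j < x) l.
Definition ysize (l : seq nat) : nat := sumn l.

Definition interlace_plus (l l' : seq nat) : Prop :=
  forall i, row l' i <= row l i /\ row l i.+1 <= row l' i.
Definition interlace_minus (l l' : seq nat) : Prop :=
  forall i, col l' i <= col l i /\ col l i.+1 <= col l' i.
Definition interlace (s : bool) (l l' : seq nat) : Prop :=
  if s then interlace_plus l l' else interlace_minus l l'.

Definition subdiag (l l' : seq nat) : Prop := forall i, row l i <= row l' i.

Definition transition (sg : int -> bool) (th : int -> int) (mu : int -> bool)
    (nup ndown : seq nat) (V : int -> seq nat) : Prop :=
  (forall n, young (V n)) /\
  (exists N : nat, forall n : int,
      ((n < - N%:Z)%R -> V n = ndown) /\ ((N%:Z < n)%R -> V n = nup)) /\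
  (forall a : int,
      let e := mu (th a) in let s := sg (th a) in
      if e then interlace s (V a) (V (a + 1)%R)
           else interlace s (V (a + 1)%R) (V a)).

Definition is_min_transition sg th mu nup ndown (Vm : int -> seq nat) : Prop :=
  transition sg th mu nup ndown Vm /\
  forall V, transition sg th mu nup ndown V -> forall n, subdiag (Vm n) (V n).

(* the (assumed unique) minimal transition V_min *)
Definition Vmin sg th mu nup ndown : int -> seq nat :=
  epsilon (inhabits (fun _ : int => [::])) (is_min_transition sg th mu nup ndown).

Definition partial_weight (K i N : nat) (V Vm : int -> seq nat) : nat :=
  let n_of (j : nat) : int := (j%:Z - N%:Z)%R in
  \sum_(j < (N + N).+1 | ((n_of j %% K%:Z)%Z == i%:Z)%R)
     (ysize (V (n_of j)) - ysize (Vm (n_of j))).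

(* w_i(V) = w  (the sum is eventually stationary) *)
Definition weight_is K sg th mu nup ndown (V : int -> seq nat) (i w : nat) : Prop :=
  exists N0, forall N, N0 <= N ->
    partial_weight K i N V (Vmin sg th mu nup ndown) = w.

(* exponent of u_i in prod_j u'_j^{w'_j(V')} after u'_{i+kL} := u_i (k < M) *)
Definition spec_weight_is (L M : nat) sg th mu nup ndown (V : int -> seq nat)
    (i w : nat) : Prop :=
  exists N0, forall N, N0 <= N ->
    \sum_(k < M) partial_weight (M * L) (i + k * L) N V (Vmin sg th mu nup ndown) = w.

(* The coefficient of u_0^{w_0} ... u_{K-1}^{w_{K-1}} in F^{(K)} is the number of
   elements of this type; equality of generating functions is expressed as
   bijectivity between these coefficient sets for every exponent vector. *)
Definition coef_set (K : nat) sg th mu nup ndown (w : nat -> nat) :=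
  { V : int -> seq nat | transition sg th mu nup ndown V /\
      forall i, i < K -> weight_is K sg th mu nup ndown V i (w i) }.

Definition spec_coef_set (L M : nat) sg th mu nup ndown (w : nat -> nat) :=
  { V : int -> seq nat | transition sg th mu nup ndown V /\
      forall i, i < L -> spec_weight_is L M sg th mu nup ndown V i (w i) }.

From mathcomp Require Import all_boot all_order all_algebra.
From Stdlib Require Import FunctionalExtensionality PropExtensionality ProofIrrelevance.
Set Implicit Arguments. Unset Strict Implicit. Unset Printing Implicit Defensive.
Import Order.TTheory GRing.Theory Num.Theory.

(* The theorem rests on two independent observations.
   1. Transitions of type (sigma, theta; mu, nu) are defined by interlacing
      conditions that only involve the composites sigma o theta and mu o theta.
      The hypotheses say these composites coincide for the two sets of data,
      so both have literally the same transitions, hence the same minimal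
      transition V_min and the same weight corrections |V(n)| - |V_min(n)|.
   2. Specializing u'_{i+kL} := u_i collects, for each residue i mod L, the
      M residues i, i + L, ..., i + (M-1)L mod ML.  Since every integer
      congruent to i mod L is congruent to exactly one of them mod ML, the
      weight w_i of a transition mod L is the sum of its M weights mod ML.
   Hence the two coefficient sets are the same subset of maps Z -> Young
   diagrams, and the identity map is the required bijection. *)

Local Open Scope ring_scope.

Lemma modz_mod_mul (M L : nat) (n : int) :
  ((n %% (M * L)%N)%Z %% L)%Z = (n %% L)%Z.
Proof.
rewrite [in RHS](divz_eq n (M * L)%N) PoszM mulrA.
by rewrite -(modzMDl ((n %/ (M * L)%N)%Z * M) _ L).
Qed.

Lemma modz_nat_residue (K : nat) (n : int) :
  (0 < K)%N -> exists2 m : nat, (m < K)%N & (n %% K)%Z = m.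
Proof.
move=> K0.
have ge0 : 0 <= (n %% K)%Z by apply: modz_ge0; rewrite eqz_nat -lt0n.
have ltK : (n %% K)%Z < K by apply: ltz_pmod; rewrite ltz_nat.
case: (n %% K)%Z ge0 ltK => // m _ ltK.
by exists m; rewrite // -ltz_nat.
Qed.

Local Close Scope ring_scope.

Lemma residue_split (L M i m x : nat) : i < L -> m < M * L ->
  \sum_(k < M) (if m == i + k * L then x else 0) = if m %% L == i then x else 0.
Proof.
move=> iL mML; have L0 : 0 < L by apply: leq_ltn_trans iL.
case: eqP => [mLi | mLi].
- have kM : m %/ L < M by rewrite ltn_divLR.
  rewrite (bigD1 (Ordinal kM)) //= big1 ?addn0.
    by rewrite {1}(divn_eq m L) mLi addnC eqxx.
  move=> k /eqP kD; case: eqP => // mE; exfalso; apply: kD; apply: val_inj => /=.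
  by rewrite mE addnC divnMDl // divn_small // addn0.
- rewrite big1 // => k _; case: eqP => // mE; exfalso; apply: mLi.
  by rewrite mE addnC modnMDl modn_small.
Qed.

Lemma partial_weight_refine (L M i N : nat) (V Vm : int -> seq nat) :
  0 < M * L -> i < L ->
  partial_weight L i N V Vm = \sum_(k < M) partial_weight (M * L) (i + k * L) N V Vm.
Proof.
move=> ML0 iL; rewrite /partial_weight /=.
under [RHS]eq_bigr => k _ do rewrite big_mkcond.
rewrite big_mkcond exchange_big /=; apply: eq_bigr => j _.
set n : int := (j%:Z - N%:Z)%R.
have [m mML nE] := modz_nat_residue n ML0.
rewrite -(modz_mod_mul M L n) nE modz_nat !eqz_nat.
under eq_bigr => k _ do rewrite eqz_nat.
by rewrite residue_split.
Qed.

Lemma transition_compose sg th mu sg' th' mu' nup ndown :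
  (forall a, sg (th a) = sg' (th' a)) -> (forall a, mu (th a) = mu' (th' a)) ->
  transition sg th mu nup ndown = transition sg' th' mu' nup ndown.
Proof.
move=> Hs Hm; apply: functional_extensionality => V.
apply: propositional_extensionality; rewrite /transition /=.
by split=> -[Y [B I]]; do 2!split=> //; move=> a; have := I a; rewrite Hs Hm.
Qed.

Lemma Vmin_compose sg th mu sg' th' mu' nup ndown :
  (forall a, sg (th a) = sg' (th' a)) -> (forall a, mu (th a) = mu' (th' a)) ->
  Vmin sg th mu nup ndown = Vmin sg' th' mu' nup ndown.
Proof. by move=> Hs Hm; rewrite /Vmin /is_min_transition (transition_compose nup ndown Hs Hm). Qed.

Lemma weight_specialize L M sg th mu sg' th' mu' nup ndown V i w :
  (forall a, sg (th a) = sg' (th' a)) -> (forall a, mu (th a) = mu' (th' a)) ->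
  0 < M * L -> i < L ->
  weight_is L sg th mu nup ndown V i w <->
  spec_weight_is L M sg' th' mu' nup ndown V i w.
Proof.
move=> Hs Hm ML0 iL; rewrite /weight_is /spec_weight_is (Vmin_compose nup ndown Hs Hm).
have refine N := partial_weight_refine N V (Vmin sg' th' mu' nup ndown) ML0 iL.
by split=> -[N0 HN]; exists N0 => N /HN; rewrite refine.
Qed.

Lemma sig_equiv_bij (T : Type) (P Q : T -> Prop) :
  (forall x, P x <-> Q x) ->
  exists f : {x | P x} -> {x | Q x}, bijective f.
Proof.
move=> PQ; exists (fun x => exist Q (sval x) (proj1 (PQ _) (proj2_sig x))).
exists (fun x => exist P (sval x) (proj2 (PQ _) (proj2_sig x))).
- by move=> [x px]; apply: eq_sig => //=; apply: proof_irrelevance.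
- by move=> [x qx]; apply: eq_sig => //=; apply: proof_irrelevance.
Qed.

Theorem mainTheorem3 (L : nat) (sg : int -> bool) (th : int -> int)
    (mu : int -> bool) (M : nat) (sg' : int -> bool) (th' : int -> int) :
  0 < L -> periodic L sg -> affine_perm L th -> is_maya mu -> charge_zero mu ->
  0 < M -> periodic (M * L) sg' -> affine_perm (M * L) th' ->
  (forall a, sg (th a) = sg' (th' a)) ->
  (forall a, mu (th a) = empty_maya (th' a)) ->
  forall w : nat -> nat,
    exists f : coef_set L sg th mu [::] [::] w ->
               spec_coef_set L M sg' th' empty_maya [::] [::] w,
      bijective f.
Proof.
move=> L0 _ _ _ _ M0 _ _ Hs Hm w.
have ML0 : 0 < M * L by rewrite muln_gt0 M0 L0.
apply: sig_equiv_bij => V.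
rewrite (transition_compose [::] [::] Hs Hm).
have equiv_weight i (iL : i < L) :=
  @weight_specialize L M sg th mu sg' th' empty_maya [::] [::] V i (w i) Hs Hm ML0 iL.
split=> -[T W]; split=> // i iL; apply/(equiv_weight i iL); exact: W.
Qed.
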